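(* Let $X$ be a random variable in $[0,1]$ with mean $\mu\in(0,1)$ and variance $\sigma^2$, and let $g(\mu)=\max\{\mu,1-\mu\}$. Then \[ \mathbb{E}[\psi_E(|X-\mu|)]\le\sigma^2\,\frac{\psi_E(g(\mu))}{g(\mu)^2}. \] Moreover, this constant is sharp: for each $\mu\in(0,1)$, \[ \sup\left\{\frac{\mathbb{E}[\psi_E(|X-\mu|)]}{\operatorname{Var}(X)}\right\}=\frac{\psi_E(g(\mu))}{g(\mu)^2}, \] where the supremum is over all non-degenerate random variables $X\in[0,1]$ with $\mathbb{E}X=\mu$.
   Context: $\psi_E(x)=-\log(1-x)-x$ for $x\in[0,1)$. *)

From HB Require Import structures.
From mathcomp Require Import all_boot all_order all_algebra.
From mathcomp Require Import all_classical all_reals all_analysis.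
Set Implicit Arguments. Unset Strict Implicit. Unset Printing Implicit Defensive.
Import Order.TTheory GRing.Theory Num.Theory.
Local Open Scope ring_scope.

(* psi_E(x) = -log(1-x) - x, meant for x in [0,1). *)
Definition psiE {R : realType} (x : R) : R := - ln (1 - x) - x.

Definition gmu {R : realType} (mu : R) : R := Num.max mu (1 - mu).

(* The pointwise bound  psiE |x - mu| <= (x - mu)^2 psiE(g)/g^2  on [0,1] holds because
   psiE(s)/s^2 is nondecreasing on (0,1) and |x - mu| <= g(mu); taking expectations gives the
   inequality.  It is sharp: put mass p at the endpoint s of [0,1] farthest from mu, so that
   |s - mu| = g(mu), and the rest at the point fixing the mean; then the ratio
   E[psiE|X - mu|] / Var X is at least (1 - p) psiE(g)/g^2, and p can be taken arbitrarily small. *)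
From HB Require Import structures.
From mathcomp Require Import all_boot all_order all_algebra.
From mathcomp Require Import all_classical all_reals all_analysis.
From mathcomp Require Import ring lra measurable_realfun.
Import Order.TTheory GRing.Theory Num.Theory.
Local Open Scope classical_set_scope.
Local Open Scope ring_scope.

Section psiE_ratio.
Context {R : realType}.
Implicit Types s t x : R.

Lemma ge0_is_derive_le (f df : R -> R) (a b : R) : a <= b ->
  (forall x, a <= x <= b -> is_derive x 1 f (df x)) ->
  (forall x, a < x < b -> 0 <= df x) -> f a <= f b.
Proof.
move=> ab fdf df0.
have fd x : a <= x <= b -> derivable f x 1 by move/fdf/(@ex_derive _ _ _ _ _ _ _).
apply: (@ger0_derive1_ndecr _ f a b) => //.
- by move=> x; rewrite in_itv /= => /andP[ax xb]; apply: fd; rewrite !ltW.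
- move=> x; rewrite in_itv /= => /andP[ax xb].
  have fx : is_derive x 1 f (df x) by apply: fdf; rewrite !ltW.
  by rewrite derive1E derive_val df0 ?ax.
- by apply: derivable_within_continuous => x; rewrite in_itv /=; apply: fd.
Qed.

Lemma is_derive_1B x : is_derive x 1 (fun s : R => 1 - s) (-1).
Proof. by have := is_deriveB (is_derive_cst (1 : R) x 1) (is_derive_id x 1); rewrite sub0r. Qed.

Lemma is_derive_ln1B {x} : x < 1 -> is_derive x 1 (fun s : R => ln (1 - s)) (- (1 - x)^-1).
Proof.
move=> x1; have dln : is_derive (1 - x) 1 (@ln R) (1 - x)^-1 by apply: is_derive1_ln; lra.
by have := @is_derive1_comp R _ (fun s => 1 - s) x _ _ dln (is_derive_1B x); rewrite mulrN1.
Qed.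

Lemma is_derive_inv1B {x} : x < 1 -> is_derive x 1 (fun s : R => (1 - s)^-1) ((1 - x)^-2).
Proof.
move=> x1; have x1' : 1 - x != 0 by rewrite subr_eq0 eq_sym lt_eqF.
have := @is_deriveV _ (fun s => 1 - s) _ _ _ x1' (is_derive_1B x).
by move/is_derive_eq; apply; rewrite /GRing.scale /= mulrN1 opprK.
Qed.

Lemma is_derive_psiE {x} : x < 1 -> is_derive x 1 (@psiE R) ((1 - x)^-1 - 1).
Proof.
move=> x1; have := is_deriveB (is_deriveN (is_derive_ln1B x1)) (is_derive_id x 1).
by rewrite opprK.
Qed.

Lemma psiE0 : psiE 0 = 0 :> R.
Proof. by rewrite /psiE !subr0 ln1 oppr0. Qed.

Lemma psiE_ge0 s : 0 <= s < 1 -> 0 <= psiE s.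
Proof.
case/andP=> s0 s1; rewrite /psiE subr_ge0 lerNr.
by have := @le_ln1Dx R (- s); rewrite -/(1 - s) => -> //; lra.
Qed.

Lemma measurable_psiE : measurable_fun setT (@psiE R).
Proof.
apply: measurable_funB => //; apply: measurableT_comp => //.
exact: measurableT_comp (@measurable_ln R) (measurable_funB _ _).
Qed.

Definition psiE_ratio s := psiE s / s ^+ 2.

(* [s ^+ 3] times the derivative of [psiE_ratio] at [s]. *)
Let ratio_numer s := (1 - s)^-1 + 2 * ln (1 - s) + s - 1.

Let ratio_numer_ge0 s : 0 <= s < 1 -> 0 <= ratio_numer s.
Proof.
case/andP=> s0 s1.
have -> : 0 = ratio_numer 0 by rewrite /ratio_numer subr0 invr1 ln1 mulr0 !addr0 subrr.
apply: (@ge0_is_derive_le _ (fun x => ((1 - x)^-1 - 1) ^+ 2)) => // [x /andP[_ xs]|x _].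
  have x1 : x < 1 by lra.
  have x1' : 1 - x != 0 by rewrite subr_eq0 eq_sym lt_eqF.
  have := is_deriveD (is_deriveD (is_deriveD (is_derive_inv1B x1)
    (is_deriveZ 2 (is_derive_ln1B x1))) (is_derive_id x 1)) (is_derive_cst (-1 : R) x 1).
  by move/is_derive_eq; apply; rewrite /GRing.scale /=; field.
exact: sqr_ge0.
Qed.

Lemma psiE_ratio_homo s t : 0 < s -> s <= t -> t < 1 -> psiE_ratio s <= psiE_ratio t.
Proof.
move=> s0 st t1.
apply: (@ge0_is_derive_le _ (fun x => ratio_numer x / x ^+ 3)) => // [x|x] /andP[sx xt].
  have x1 : x < 1 by lra.
  have x2 : x ^+ 2 != 0 by rewrite expf_neq0 // gt_eqF //; lra.
  have dsq : is_derive x 1 (fun s : R => s ^+ 2) (2 * x).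
    have := is_deriveM (is_derive_id x 1) (is_derive_id x 1).
    by move/is_derive_eq; apply; rewrite /GRing.scale /=; ring.
  have := is_deriveM (is_derive_psiE x1) (@is_deriveV _ (fun s => s ^+ 2) _ _ _ x2 dsq).
  by move/is_derive_eq; apply; rewrite /GRing.scale /= /ratio_numer /psiE; field; lra.
by apply: divr_ge0; [apply: ratio_numer_ge0 | apply: exprn_ge0]; lra.
Qed.

Lemma psiE_le_sqr_ratio s t : 0 <= s <= t -> t < 1 -> psiE s <= s ^+ 2 * psiE_ratio t.
Proof.
case/andP=> s0 st t1; have [->|s_neq0] := eqVneq s 0; first by rewrite psiE0 expr0n mul0r.
have {s_neq0} s_gt0 : 0 < s by rewrite lt_neqAle eq_sym s_neq0.
have -> : psiE s = s ^+ 2 * psiE_ratio s.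
  by rewrite /psiE_ratio mulrC divfK // expf_neq0 // gt_eqF.
by rewrite ler_wpM2l ?sqr_ge0 ?psiE_ratio_homo.
Qed.

End psiE_ratio.

Section gmu.
Context {R : realType}.
Implicit Types mu x : R.

Lemma gmu_ge mu : mu <= gmu mu.
Proof. by rewrite /gmu le_max lexx. Qed.

Lemma gmu_lt1 {mu} : 0 < mu < 1 -> gmu mu < 1.
Proof. by case/andP=> m0 m1; rewrite /gmu gt_max; apply/andP; split; lra. Qed.

Lemma dist_le_gmu mu x : 0 <= x <= 1 -> `|x - mu| <= gmu mu.
Proof.
case/andP=> x0 x1; rewrite ler_norml lerNl opprB /gmu !le_max.
by apply/andP; split; apply/orP; [left|right]; lra.
Qed.

Lemma dist_le_1Bgmu mu x : `|x - mu| <= 1 - gmu mu -> 0 <= x <= 1.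
Proof.
rewrite ler_norml /gmu => /andP[]; rewrite lerBrDr.
by case: (leP mu (1 - mu)) => h ? ?; apply/andP; split; lra.
Qed.

Lemma exists_gmu_dist mu : 0 <= mu <= 1 -> exists2 s, 0 <= s <= 1 & `|s - mu| = gmu mu.
Proof.
case/andP=> m0 m1; rewrite /gmu; case: (leP mu (1 - mu)) => h.
  by exists 1; [rewrite lexx ler01 | rewrite ger0_norm // subr_ge0].
by exists 0; [rewrite lexx ler01 | rewrite sub0r normrN ger0_norm].
Qed.

Lemma psiE_dist_ge0 {mu x} : 0 < mu < 1 -> 0 <= x <= 1 -> 0 <= psiE `|x - mu|.
Proof.
move=> mu01 x01; rewrite psiE_ge0 // normr_ge0 /=.
exact: le_lt_trans (dist_le_gmu mu x x01) (gmu_lt1 mu01).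
Qed.

Lemma psiE_ratio_gmu_ge0 {mu} : 0 < mu < 1 -> 0 <= psiE_ratio (gmu mu).
Proof.
move=> mu01; have g0 : 0 <= gmu mu by rewrite (le_trans _ (gmu_ge mu)) // ltW // (andP mu01).1.
by rewrite divr_ge0 ?sqr_ge0 // psiE_ge0 // g0 gmu_lt1.
Qed.

Lemma psiE_dist_le mu x : 0 < mu < 1 -> 0 <= x <= 1 ->
  psiE `|x - mu| <= (x - mu) ^+ 2 * psiE_ratio (gmu mu).
Proof.
move=> /gmu_lt1 g1 /(dist_le_gmu mu) xg.
by rewrite -real_normK ?num_real // psiE_le_sqr_ratio // normr_ge0.
Qed.

End gmu.

Section psiE_moment.
Local Open Scope ereal_scope.
Context {R : realType} {d} {T : measurableType d} {P : probability T R}.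

Lemma variance_meanE {X : T -> R} {mu : R} : 'E_P[X] = mu%:E ->
  'V_P[X] = 'E_P[fun t => (X t - mu) ^+ 2]%R.
Proof. by move=> EX; rewrite /variance covariance.unlock EX. Qed.

Lemma expectation_psiE_dist_le {X : {RV P >-> R}} {mu : R} :
  (forall t, 0 <= X t <= 1)%R -> (0 < mu < 1)%R -> 'E_P[X] = mu%:E ->
  'E_P[fun t => psiE `|(X t - mu)%R|] <= 'V_P[X] * (psiE_ratio (gmu mu))%:E.
Proof.
move=> X01 mu01 EX; have c0 := psiE_ratio_gmu_ge0 mu01.
have mXmu : measurable_fun setT (fun t => X t - mu)%R by exact: measurable_funB.
rewrite (variance_meanE EX) expectation.unlock -ge0_integralZr //; last 2 first.
- by apply/measurable_EFinP; apply: measurable_funX.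
- by move=> t _; rewrite lee_fin sqr_ge0.
apply: ge0_le_integral => //.
- by move=> t _; rewrite lee_fin psiE_dist_ge0.
- apply/measurable_EFinP; apply: measurableT_comp measurable_psiE _.
  exact: measurableT_comp.
- by apply/measurable_EFinP; apply: measurable_funM => //; exact: measurable_funX.
- by move=> t _; rewrite lee_fin psiE_dist_le.
Qed.

End psiE_moment.

Section two_point.
Context {R : realType}.
Implicit Types p mu s : R.

Lemma measurable_bool_fun (f : bool -> R) : measurable_fun setT f.
Proof. by move=> _ Y _. Qed.

Definition bernoulli_RV p (f : bool -> R) : {RV bernoulli_prob p >-> R} :=
  mfun_Sub (mem_set (measurable_bool_fun f)).

Lemma expectation_bernoulli p (f : bool -> R) : 0 <= p <= 1 -> (forall b, 0 <= f b) ->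
  ('E_(bernoulli_prob p)[f] = (p * f true + (1 - p) * f false)%:E)%E.
Proof. by move=> p01 f0; rewrite expectation.unlock integral_bernoulli_prob. Qed.

(* Chosen so that [two_point_RV p mu s] below has mean [mu]. *)
Definition balancing_point p mu s := mu - (s - mu) * (p / (1 - p)).

Definition two_point_RV p mu s : {RV bernoulli_prob p >-> R} :=
  bernoulli_RV p (fun b => if b then s else balancing_point p mu s).

Lemma expectation_two_point {p mu s} : 0 < p < 1 -> 0 <= s <= 1 ->
  0 <= balancing_point p mu s <= 1 -> ('E_(bernoulli_prob p)[two_point_RV p mu s] = mu%:E)%E.
Proof.
move=> /andP[p0 p1] /andP[s0 s1] /andP[a0 a1].
rewrite expectation_bernoulli ?ltW //; last by case.
by congr EFin; rewrite /= /balancing_point; field; rewrite subr_eq0 gt_eqF.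
Qed.

Lemma variance_two_point {p mu s} : 0 < p < 1 -> 0 <= s <= 1 ->
  0 <= balancing_point p mu s <= 1 ->
  ('V_(bernoulli_prob p)[two_point_RV p mu s] = ((s - mu) ^+ 2 * (p / (1 - p)))%:E)%E.
Proof.
move=> p01 s01 a01; have /andP[p0 p1] := p01.
rewrite (variance_meanE (expectation_two_point p01 s01 a01)).
rewrite expectation_bernoulli ?ltW // => [|b]; last exact: sqr_ge0.
by congr EFin; rewrite /= /balancing_point; field; rewrite subr_eq0 gt_eqF.
Qed.

End two_point.

Section psiE_variance_ratios.
Context {R : realType}.
Implicit Types mu : R.

Definition psiE_variance_ratios mu : set R :=
  [set r : R | exists (d : measure_display) (T : measurableType d)
                 (P : probability T R) (X : {RV P >-> R}),
     [/\ (forall t, 0 <= X t <= 1), ('E_P[X] = mu%:E)%E, (0 < 'V_P[X])%E &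
         r = fine ('E_P[fun t => psiE `|(X t - mu)%R|])%E / fine 'V_P[X]]].

Lemma psiE_variance_ratios_ub {mu} : 0 < mu < 1 ->
  ubound (psiE_variance_ratios mu) (psiE_ratio (gmu mu)).
Proof.
move=> mu01 r [d [T [P [X [X01 EX V0 ->]]]]].
have := expectation_psiE_dist_le X01 mu01 EX.
move: V0; case: ('V_P[X])%E => [v| |] //= v0; last by rewrite invr0 mulr0 psiE_ratio_gmu_ge0.
case: ('E_P[_])%E => [e| |] //=; last by rewrite mul0r psiE_ratio_gmu_ge0.
by rewrite lee_fin ler_pdivrMr // mulrC.
Qed.

Lemma psiE_variance_ratios_two_point {mu} p : 0 < mu < 1 -> 0 < p <= 1 - gmu mu ->
  exists2 r, psiE_variance_ratios mu r & psiE_ratio (gmu mu) * (1 - p) <= r.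
Proof.
move=> mu01 /andP[p0 pg]; have [m0 m1] := andP mu01.
have g0 : 0 < gmu mu := lt_le_trans m0 (gmu_ge mu).
have p1 : p < 1 by lra.
have p01 : 0 < p < 1 by rewrite p0 p1.
have m01 : 0 <= mu <= 1 by rewrite !ltW.
have [s s01 sg] := exists_gmu_dist mu m01.
set a := balancing_point p mu s; set q := p / (1 - p).
have q0 : 0 <= q by rewrite divr_ge0 ?ltW //; lra.
have ag : `|a - mu| = gmu mu * q by rewrite addrAC subrr add0r normrN normrM sg ger0_norm.
have a01 : 0 <= a <= 1 by apply: (dist_le_1Bgmu mu); rewrite ag /q mulrA ler_pdivrMr; nra.
set X := two_point_RV p mu s.
have EpsiE : ('E_(bernoulli_prob p)[fun t => psiE `|(X t - mu)%R|] =
    (p * psiE (gmu mu) + (1 - p) * psiE `|a - mu|)%:E)%E.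
  by rewrite expectation_bernoulli ?sg ?ltW // => -[]; apply: psiE_dist_ge0.
have VX := variance_two_point p01 s01 a01; rewrite -/X -(real_normK (num_real _)) sg in VX.
exists ((p * psiE (gmu mu) + (1 - p) * psiE `|a - mu|) / (gmu mu ^+ 2 * q)).
  exists _, _, (bernoulli_prob p), X; split; first by case.
  - exact: expectation_two_point.
  - by rewrite VX lte_fin mulr_gt0 ?exprn_gt0 // divr_gt0 //; lra.
  - by rewrite EpsiE VX.
have -> : psiE_ratio (gmu mu) * (1 - p) = p * psiE (gmu mu) / (gmu mu ^+ 2 * q).
  by rewrite /psiE_ratio /q; field; rewrite !gt_eqF //; lra.
apply: ler_wpM2r; first by rewrite invr_ge0 mulr_ge0 ?sqr_ge0.
by rewrite lerDl mulr_ge0 ?psiE_dist_ge0 // subr_ge0 ltW.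
Qed.

End psiE_variance_ratios.

Lemma sup_eq_approx_ubound {R : realType} (S : set R) (c : R) : ubound S c ->
  (forall e, 0 < e -> exists2 r, S r & c - e <= r) -> sup S = c.
Proof.
move=> Sc Sapprox; have [r Sr _] := Sapprox 1 ltr01.
apply/eqP; rewrite eq_le ge_sup //=; last by exists r.
apply/ler_addgt0Pr => e /Sapprox[s Ss cs].
by rewrite -lerBlDr (le_trans cs) // ub_le_sup //; exists c.
Qed.

Lemma sup_psiE_variance_ratios {R : realType} (mu : R) : 0 < mu < 1 ->
  sup (psiE_variance_ratios mu) = psiE_ratio (gmu mu).
Proof.
move=> mu01; apply: sup_eq_approx_ubound (psiE_variance_ratios_ub mu01) _ => e e0.
have c0 := psiE_ratio_gmu_ge0 mu01; set c := psiE_ratio _ in c0 *.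
have [g1 g0] : 1 - gmu mu <= 1 /\ 0 < 1 - gmu mu.
  by rewrite subr_gt0 gmu_lt1 // lerBlDr lerDl (le_trans _ (gmu_ge mu)) // ltW // (andP mu01).1.
set q := e / (e + c); have q0 : 0 < q by rewrite divr_gt0 //; lra.
have q1 : q <= 1 by rewrite /q ler_pdivrMr; lra.
have cq : c * q <= e by rewrite mulrA ler_pdivrMr; nra.
have [|r Sr cr] := psiE_variance_ratios_two_point ((1 - gmu mu) * q) mu01.
  by rewrite mulr_gt0 //= ler_piMr // ltW.
have cpq : c * ((1 - gmu mu) * q) <= e.
  by rewrite mulrCA (le_trans _ cq) // ler_piMl // mulr_ge0 // ltW.
by exists r => //; apply: le_trans cr; rewrite mulrBr mulr1 lerB.
Qed.

Theorem mainTheorem17 (R : realType) :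
  (forall (d : measure_display) (T : measurableType d) (P : probability T R)
          (X : {RV P >-> R}) (mu : R),
      (forall t, 0 <= X t <= 1) -> 0 < mu < 1 -> ('E_P[X] = mu%:E)%E ->
      ('E_P[fun t => psiE `|(X t - mu)%R|] <=
         'V_P[X] * (psiE (gmu mu) / (gmu mu) ^+ 2)%:E)%E)
  /\
  (forall mu : R, 0 < mu < 1 ->
     sup [set r : R | exists (d : measure_display) (T : measurableType d)
                        (P : probability T R) (X : {RV P >-> R}),
            [/\ (forall t, 0 <= X t <= 1), ('E_P[X] = mu%:E)%E, (0 < 'V_P[X])%E &
                r = fine ('E_P[fun t => psiE `|(X t - mu)%R|])%E / fine 'V_P[X]]]
     = psiE (gmu mu) / (gmu mu) ^+ 2).
Proof.
split=> [d T P X mu | mu]; first exact: expectation_psiE_dist_le.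
exact: sup_psiE_variance_ratios.
Qed.
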